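(* Let $G$ be an undirected multigraph with minimum degree at least $3$ and let $(C,F)$ be a FVC in $G$. Then $|F|\le e(C,F)$.
   Context: The degree of a vertex counts edge-endpoints, a self-loop contributing two. For disjoint $X,Y\subseteq V(G)$, $e(X,Y)$ is the number of edges with one endpoint in $X$ and the other in $Y$. A feedback vertex cut (FVC) in $G$ is a pair of disjoint sets $C,F\subseteq V(G)$ such that $G[F]$ is a forest (self-loops and parallel edges count as cycles) and every tree $T$ of $G[F]$ satisfies $e(V(T),V(G)\setminus(C\cup F))\le1$. *)

From mathcomp Require Import all_boot.
Set Implicit Arguments. Unset Strict Implicit. Unset Printing Implicit Defensive.

(* A finite undirected multigraph: vertex set V, edge set E, and each edge e
   has the (unordered) pair of endpoints {src e, dst e}.  Self-loops
   (src e = dst e) and parallel edges are allowed. *)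

Section MG.
Variables (V E : finType) (src dst : E -> V).

(* degree: number of edge-endpoints at v (a self-loop contributes 2) *)
Definition deg (v : V) : nat :=
  #|[set e : E | src e == v]| + #|[set e : E | dst e == v]|.

Definition joins (e : E) (u w : V) : bool :=
  ((src e == u) && (dst e == w)) || ((src e == w) && (dst e == u)).

Definition eXY (X Y : {set V}) : nat :=
  #|[set e : E | ((src e \in X) && (dst e \in Y)) ||
                 ((src e \in Y) && (dst e \in X))]|.

(* A cycle of length k.+1 in G[F]: distinct vertices vs i in F and distinct
   edges es i, with es i joining vs i and vs (i+1 mod k.+1).  Length 1 is a
   self-loop, length 2 a pair of parallel edges. *)
Definition has_cycle_in (F : {set V}) : Prop :=
  exists (k : nat) (vs : 'I_k.+1 -> V) (es : 'I_k.+1 -> E),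
    [/\ injective vs, injective es,
        forall i, vs i \in F &
        forall i, joins (es i) (vs i) (vs (ordS i))].

Definition is_forest (F : {set V}) : Prop := ~ has_cycle_in F.

Definition adjIn (F : {set V}) : rel V :=
  fun u w => [&& u \in F, w \in F & [exists e : E, joins e u w]].

Definition compIn (F : {set V}) (x : V) : {set V} :=
  [set y | connect (adjIn F) x y].

Definition FVC (C F : {set V}) : Prop :=
  [/\ [disjoint C & F], is_forest F &
      forall x, x \in F -> eXY (compIn F x) (~: (C :|: F)) <= 1].

End MG.

From Pilot Require Import Defs.
From mathcomp Require Import all_boot zify.
Set Implicit Arguments. Unset Strict Implicit. Unset Printing Implicit Defensive.

(* It suffices to find v in F with at most one edge to
   V \ C: moving v from F to C keeps a FVC, and as v has degree >= 3 and no
   loop, this trades the e(v, C) >= 2 edges at v counted in e(C, F) for at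
   most e(v, F - v) <= 1 new ones.
   For v, take a tree T of G[F] and a vertex t of T with the most edges
   leaving C u F.  A maximal path of G[F] ending at t starts at a leaf y of T
   (isolated if y = t); a leaf y <> t has no edge leaving C u F, since T has
   at most one such edge and t has at least as many as y. *)

Lemma ordS_ordS_neq k (i : 'I_k.+1) : 1 < k -> ordS (ordS i) != i.
Proof.
move=> k_gt1; apply/eqP => /(congr1 val) /=; have lt_i := ltn_ord i.
have [lt_ik | eq_ik] : i.+1 < k.+1 \/ i.+1 = k.+1 by lia.
  rewrite (modn_small lt_ik).
  have [lt2 | eq2] : i.+2 < k.+1 \/ i.+2 = k.+1 by lia.
    by rewrite modn_small //; lia.
  by rewrite eq2 modnn; lia.
by rewrite eq_ik modnn modn_small //; lia.
Qed.

Lemma nth_ord_inj (T : eqType) (x0 : T) s k : k < size s -> uniq s ->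
  injective (fun i : 'I_k.+1 => nth x0 s i).
Proof.
move=> lt_ks s_uniq i j /eqP; rewrite nth_uniq // => [/eqP /val_inj // | |];
  exact: leq_trans (ltn_ord _) lt_ks.
Qed.

Section Multigraph.
Variables (V E : finType) (src dst : E -> V).
Local Notation deg := (deg src dst).
Local Notation joins := (joins src dst).
Local Notation eXY := (eXY src dst).
Local Notation has_cycle_in := (has_cycle_in src dst).
Local Notation is_forest := (is_forest src dst).
Local Notation adjIn := (adjIn src dst).
Local Notation compIn := (compIn src dst).
Implicit Types (C F R X Y Z : {set V}) (u v w x y : V) (p q : seq V) (e f : E).

Lemma joinsC e u w : joins e u w = joins e w u.
Proof. by rewrite /Defs.joins orbC. Qed.

Lemma joins_ends e a b c d : joins e a b -> joins e c d ->
  (a = c /\ b = d) \/ (a = d /\ b = c).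
Proof.
by rewrite /Defs.joins => /orP[]/andP[/eqP<- /eqP<-] /orP[]/andP[/eqP-> /eqP->];
  [left | right | right | left].
Qed.

Definition cross (X Y : {set V}) : {set E} :=
  [set e | ((src e \in X) && (dst e \in Y)) || ((src e \in Y) && (dst e \in X))].

Lemma cross1P x Y e :
  reflect (exists2 w, w \in Y & joins e x w) (e \in cross [set x] Y).
Proof.
rewrite inE !in_set1 /Defs.joins; apply: (iffP orP).
  case=> [/andP[/eqP-> Yd] | /andP[Ys /eqP->]].
    by exists (dst e); rewrite ?eqxx.
  by exists (src e); rewrite ?eqxx ?orbT.
by case=> w Yw /orP[]/andP[/eqP-> /eqP->]; rewrite eqxx Yw; [left | right].
Qed.

Lemma eXYC X Y : eXY X Y = eXY Y X.
Proof. by apply: eq_card => e; rewrite !inE orbC. Qed.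

Lemma eXYS X X' Y Y' : X \subset X' -> Y \subset Y' -> eXY X Y <= eXY X' Y'.
Proof.
move=> /subsetP sX /subsetP sY; apply: subset_leq_card; apply/subsetP => e.
by rewrite !inE => /orP[/andP[/sX-> /sY->] | /andP[/sY-> /sX->]]; rewrite ?orbT.
Qed.

Lemma crossUr X Y Z : cross X (Y :|: Z) = cross X Y :|: cross X Z.
Proof.
apply/setP => e; rewrite !inE.
by case: (src e \in X); case: (dst e \in X); case: (src e \in Y);
  case: (dst e \in Y); case: (src e \in Z); case: (dst e \in Z).
Qed.

Lemma eXYUr_le X Y Z : eXY X (Y :|: Z) <= eXY X Y + eXY X Z.
Proof. by rewrite /Defs.eXY -/(cross _ _) crossUr cardsU leq_subr. Qed.

Lemma eXYUr X Y Z : [disjoint X & Y :|: Z] -> [disjoint Y & Z] ->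
  eXY X (Y :|: Z) = eXY X Y + eXY X Z.
Proof.
move=> dX dYZ; rewrite /Defs.eXY -/(cross _ _) crossUr -cardsUI.
suff -> : cross X Y :&: cross X Z = set0 by rewrite cards0 addn0.
have nXY a : a \in X -> a \in Y -> False.
  by move=> aX aY; move: (disjointFr dX aX); rewrite inE aY.
have nXZ a : a \in X -> a \in Z -> False.
  by move=> aX aZ; move: (disjointFr dX aX); rewrite inE aZ orbT.
have nYZ a : a \in Y -> a \in Z -> False.
  by move=> aY; rewrite (disjointFr dYZ aY).
apply/setP => e; rewrite !inE; apply/negP.
by case/andP => /orP[]/andP[sX dY] /orP[]/andP[sZ dZ]; [
  exact: (nYZ (dst e)) | exact: (nXZ (src e)) | exact: (nXY (src e)) |
  exact: (nYZ (src e))].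
Qed.

Lemma deg_eXY v : (forall e, ~~ joins e v v) -> deg v = eXY [set v] [set: V].
Proof.
move=> noloop; rewrite /Defs.deg -cardsUI.
suff [-> ->] : [set e | src e == v] :&: [set e | dst e == v] = set0 /\
   [set e | src e == v] :|: [set e | dst e == v] = cross [set v] [set: V].
  by rewrite cards0 addn0.
split; apply/setP => e; rewrite !inE ?andbT //.
apply: contraNF (noloop e) => /andP[/eqP src_e /eqP dst_e].
by rewrite /Defs.joins src_e dst_e eqxx.
Qed.

Section Cycles.
Variable F : {set V}.

Lemma adjIn_sym : symmetric (adjIn F).
Proof.
move=> u w; rewrite /Defs.adjIn andbCA; congr [&& _, _ & _].
by apply/existsP/existsP => -[e]; exists e; rewrite joinsC.
Qed.

Lemma path_subset x p : path (adjIn F) x p -> {subset p <= F}.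
Proof.
elim: p x => //= y p IH x /andP[/and3P[_ yF _] /IH sF] z.
by rewrite inE => /predU1P[-> | /sF].
Qed.

Lemma compIn_subset x : x \in F -> compIn F x \subset F.
Proof.
move=> xF; apply/subsetP => y; rewrite inE => /connectP[p /path_subset sF ->].
by have /predU1P[-> | /sF] := mem_last x p.
Qed.

Lemma cycle_edges_inj k (vs : 'I_k.+1 -> V) (es : 'I_k.+1 -> E) :
  1 < k -> injective vs -> (forall i, joins (es i) (vs i) (vs (ordS i))) ->
  injective es.
Proof.
move=> k_gt1 vs_inj vs_es i j eq_es.
have := vs_es i; rewrite eq_es => /joins_ends/(_ (vs_es j)).
case=> [[/vs_inj // _] | [/vs_inj ij /vs_inj ji]].
by move: (ordS_ordS_neq j k_gt1); rewrite -ij ji eqxx.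
Qed.

Lemma loop_cycle x e : x \in F -> joins e x x -> has_cycle_in F.
Proof.
move=> xF xex; exists 0, (fun=> x), (fun=> e).
by split=> // [i j _ | i j _]; rewrite (ord1 i) (ord1 j).
Qed.

Lemma parallel_cycle x w e e' : x \in F -> w \in F -> x != w -> e != e' ->
  joins e x w -> joins e' x w -> has_cycle_in F.
Proof.
move=> xF wF xw ee' xew xe'w.
exists 1, (fun i => nth x [:: x; w] i), (fun i => nth e [:: e; e'] i); split.
- by apply: nth_ord_inj; rewrite //= inE andbT.
- by apply: nth_ord_inj; rewrite //= inE andbT.
- by move=> [[|[|//]] ?].
- by move=> [[|[|//]] ?] //=; rewrite joinsC.
Qed.

Lemma chord_cycle x p f : x \in F -> path (adjIn F) x p -> uniq (x :: p) ->
  1 < size p -> joins f (last x p) x -> has_cycle_in F.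
Proof.
move=> xF xp_path xp_uniq p_gt1 xfx.
pose vs (i : 'I_(size p).+1) := nth x (x :: p) i.
pose link a b := odflt f [pick e | joins e a b].
pose es (i : 'I_(size p).+1) :=
  if i < size p then link (vs i) (nth x p i) else f.
have vs_es i : joins (es i) (vs i) (vs (ordS i)).
  rewrite /es /vs /=; case: ifP => [lt_ip | /negbT]; rewrite -?leqNgt.
    rewrite modn_small // /link; case: pickP => // none.
    have /and3P[_ _ /existsP[e xe]] := pathP x xp_path i lt_ip.
    by rewrite none in xe.
  move=> ge_ip; have -> : nat_of_ord i = size p by have := ltn_ord i; lia.
  by rewrite modnn -[size p]/((size (x :: p)).-1) nth_last.
exists (size p), vs, es; split.
- exact: nth_ord_inj.
- by apply: cycle_edges_inj => //; apply: nth_ord_inj.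
- move=> i; rewrite /vs; have /predU1P[-> | /(path_subset xp_path)] // :=
    @mem_nth _ x (x :: p) i (ltn_ord i).
- exact: vs_es.
Qed.

End Cycles.

Definition nbrs_in (F : {set V}) y (s : seq V) :=
  forall e w, joins e y w -> w \in F -> w \in s.

Lemma nbrs_closed_extension F x p :
  x \in F -> path (adjIn F) x p -> uniq (x :: p) ->
  exists y q, [/\ y \in F, path (adjIn F) y q, uniq (y :: q),
                  last y q = last x p & nbrs_in F y (y :: q)].
Proof.
have [n] := ubnP (#|V| - size p).
elim: n x p => // n IH x p lt_n xF xp_path xp_uniq.
case: (boolP [exists e, exists w, [&& joins e x w, w \in F & w \notin x :: p]]).
  case/existsP => e /existsP[w /and3P[xew wF w_new]].
  have wxp_uniq : uniq (w :: x :: p) by rewrite /= w_new.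
  have le_V : (size p).+2 <= #|V|.
    by rewrite -[_.+2]/(size (w :: x :: p)) -(card_uniqP wxp_uniq) max_card.
  have wxp_path : path (adjIn F) w (x :: p).
    rewrite /= xp_path andbT /Defs.adjIn wF xF.
    by apply/existsP; exists e; rewrite joinsC.
  apply: (IH w (x :: p)) => //; rewrite [size _]/=.
  by clear -le_V lt_n; lia.
move=> /existsPn none; exists x, p; split=> // e w xew wF.
by move: (none e) => /existsPn/(_ w); rewrite xew wF negbK.
Qed.

Section Forest.
Variables (F : {set V}) (forestF : is_forest F).

Lemma forest_noloop x : x \in F -> forall e, ~~ joins e x x.
Proof. by move=> xF e; apply/negP => /(loop_cycle xF). Qed.

Lemma closed_end_nbr x p f w : x \in F -> path (adjIn F) x p ->
  uniq (x :: p) -> nbrs_in F x (x :: p) -> joins f x w -> w \in F ->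
  exists q, p = w :: q.
Proof.
move=> xF xp_path xp_uniq x_nbrs xfw wF.
have /predU1P[wx | wp] := x_nbrs _ _ xfw wF.
  by case: forestF; apply: (loop_cycle (e := f) xF); rewrite -{2}wx.
move=> {x_nbrs}; case/path.splitP: wp xp_path xp_uniq => [[|a p1] p2].
  by exists p2.
rewrite cat_path -cat_cons cat_uniq => /andP[pre_path _] /andP[pre_uniq _].
have chord : joins f (last x (rcons (a :: p1) w)) x.
  by rewrite last_rcons joinsC.
case: forestF; apply: (chord_cycle xF pre_path pre_uniq _ chord).
by rewrite size_rcons.
Qed.

Lemma closed_end_eXY x p : x \in F -> path (adjIn F) x p -> uniq (x :: p) ->
  nbrs_in F x (x :: p) -> eXY [set x] F <= (p != [::]).
Proof.
move=> xF xp_path xp_uniq x_nbrs.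
have nbr f w := closed_end_nbr (f := f) (w := w) xF xp_path xp_uniq x_nbrs.
case: (eqVneq p [::]) => [p0 | _] /=.
  rewrite leqn0; apply/eqP/eq_card0 => e; apply/negbTE/negP.
  by case/cross1P=> w wF /nbr/(_ wF)[q]; rewrite p0.
apply/card_le1_eqP => e e' /cross1P[w wF xew] /cross1P[w' wF' xe'w'].
have [q pq] := nbr _ _ xew wF; have [q' pq'] := nbr _ _ xe'w' wF'.
move: xe'w'; rewrite pq in pq' xp_uniq; case: pq' => <- _ xe'w.
apply/eqP; apply: contraT => ee'; case: forestF.
apply: (parallel_cycle xF wF _ ee' xe'w xew).
by move: xp_uniq; rewrite /= inE negb_or => /andP[/andP[]].
Qed.

Lemma light_vertex R u : [disjoint F & R] ->
  (forall x, x \in F -> eXY (compIn F x) R <= 1) -> u \in F ->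
  exists2 v, v \in F & eXY [set v] F + eXY [set v] R <= 1.
Proof.
move=> dFR compR uF; set T := compIn F u.
have TF : T \subset F := compIn_subset uF.
have uT : u \in T by rewrite inE connect0.
have [t tT t_max] : exists2 t, t \in T &
    forall w, w \in T -> eXY [set w] R <= eXY [set t] R.
  by case: (arg_maxnP (fun w => eXY [set w] R) uT) => t; exists t.
have tF := subsetP TF t tT.
have [y [q [yF yq_path yq_uniq /= yq_last y_nbrs]]] :=
  nbrs_closed_extension tF (isT : path (adjIn F) t [::]) (isT : uniq [:: t]).
have yT : y \in T.
  have : connect (adjIn F) y t.
    by rewrite -yq_last (path_connect yq_path) ?mem_last.
  rewrite (sym_connect_sym (adjIn_sym F)) inE => ty.
  by move: tT; rewrite inE => /connect_trans; apply.
have yR : eXY [set y] R <= 1.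
  by apply: leq_trans (compR _ uF); apply: eXYS; rewrite ?sub1set.
exists y => //; have := closed_end_eXY yF yq_path yq_uniq y_nbrs.
case: q => [|a q] /= in yq_path yq_uniq yq_last y_nbrs *.
  by rewrite leqn0 => /eqP->; rewrite add0n.
move=> yF_le.
have yt : y != t.
  move: yq_uniq => /andP[y_notin _]; apply: contraNneq y_notin => ->.
  by rewrite -yq_last mem_last.
have yt_R : eXY [set y] R + eXY [set t] R <= 1.
  rewrite -!(eXYC R) -eXYUr ?disjoints1 ?inE // 1?disjoint_sym; last first.
    by apply: disjointWl dFR; rewrite subUset !sub1set yF.
  apply: leq_trans (compR _ uF); rewrite eXYC; apply: eXYS => //.
  by rewrite subUset !sub1set yT.
have yt_max := t_max y yT.
by clear -yF_le yt_max yt_R; lia.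
Qed.

End Forest.

Lemma forestS F F' : F' \subset F -> is_forest F -> is_forest F'.
Proof.
move=> /subsetP sF forestF [k [vs [es [vs_inj es_inj vsF vs_es]]]].
by apply: forestF; exists k, vs, es; split=> // i; apply/sF.
Qed.

Lemma compInS F F' x : F' \subset F -> compIn F' x \subset compIn F x.
Proof.
move=> /subsetP sF; apply/subsetP => y; rewrite !inE.
apply: connect_sub => a b /and3P[/sF aF /sF bF ab].
by apply: connect1; rewrite /Defs.adjIn aF bF.
Qed.

Lemma FVC_shift C F v :
  FVC src dst C F -> v \in F -> FVC src dst (v |: C) (F :\ v).
Proof.
move=> [dCF forestF compR] vF; split.
- rewrite disjoint_sym disjoints_subset; apply/subsetP => w.
  by rewrite !inE => /andP[/negbTE-> wF]; rewrite (disjointFl dCF wF).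
- exact: forestS (subD1set F v) forestF.
- move=> x; rewrite inE => /andP[_ xF].
  have -> : (v |: C) :|: (F :\ v) = C :|: F by rewrite setUAC setD1K // setUC.
  apply: leq_trans (compR x xF); apply: eXYS => //.
  exact: compInS (subD1set F v).
Qed.

Lemma FVC_light_vertex C F u : FVC src dst C F -> u \in F ->
  exists2 v, v \in F & eXY [set v] (~: C) <= 1.
Proof.
move=> [dCF forestF compR] uF.
have dFR : [disjoint F & ~: (C :|: F)].
  by rewrite disjoints_subset setCK subsetUr.
have [v vF light] := light_vertex forestF dFR compR uF.
exists v => //; apply: leq_trans light; apply: leq_trans (eXYUr_le _ _ _).
apply: eXYS => //; apply/subsetP => w; rewrite !inE.
by case: (w \in C); case: (w \in F).
Qed.

Lemma eXY_shift C F v :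
  [disjoint C & F] -> v \in F -> (forall e, ~~ joins e v v) ->
  3 <= deg v -> eXY [set v] (~: C) <= 1 -> eXY (v |: C) (F :\ v) < eXY C F.
Proof.
move=> dCF vF noloop deg_v light.
have split_F : eXY C F = eXY C [set v] + eXY C (F :\ v).
  by rewrite -{1}(setD1K vF) eXYUr ?setD1K ?disjoints1 ?inE ?eqxx.
have shift_le : eXY (v |: C) (F :\ v) <= eXY [set v] (~: C) + eXY C (F :\ v).
  rewrite eXYC (leq_trans (eXYUr_le _ _ _)) // !(eXYC (F :\ v)) leq_add2r.
  apply: eXYS => //; apply/subsetP => w; rewrite !inE => /andP[_ wF].
  by rewrite (disjointFl dCF wF).
have deg_le : deg v <= eXY [set v] C + eXY [set v] (~: C).
  by rewrite deg_eXY // -(setUCr C) eXYUr_le.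
rewrite split_F (eXYC C); lia.
Qed.

End Multigraph.

Theorem lemma19 (V E : finType) (src dst : E -> V) (C F : {set V}) :
  (forall v : V, 3 <= deg src dst v) ->
  FVC src dst C F ->
  #|F| <= eXY src dst C F.
Proof.
move=> deg_ge3; have [n] := ubnP #|F|; elim: n C F => // n IH C F lt_Fn fvc.
case: (set_0Vmem F) => [-> | [u uF]]; first by rewrite cards0.
have [v vF light] := FVC_light_vertex fvc uF.
have [dCF forestF _] := fvc.
have lt_Fvn : #|F :\ v| < n by move: lt_Fn; rewrite (cardsD1 v F) vF.
have := IH _ _ lt_Fvn (FVC_shift fvc vF).
have := eXY_shift dCF vF (forest_noloop forestF vF) (deg_ge3 v) light.
rewrite (cardsD1 v F) vF; lia.
Qed.
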